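(* Let $S$ be an idempotent semiring and define the binary relation $\sigma$ on $S$ by: $a\,\sigma\, b$ if and only if $aba=aba+a+aba$ and $bab=bab+b+bab$. Then the congruence on $S$ generated by $\sigma$ is the least distributive lattice congruence on $S$.
   Context: An idempotent semiring is an algebra $(S,+,\cdot)$ with two binary operations such that $(S,+)$ and $(S,\cdot)$ are bands (associative, with $x+x=x$ and $xx=x$), and both distributive laws $x(y+z)=xy+xz$ and $(x+y)z=xz+yz$ hold; addition is not assumed commutative. A distributive lattice congruence on $S$ is a congruence $\rho$ such that $S/\rho$ is a distributive lattice, i.e. $S/\rho$ satisfies $x+y\approx y+x$, $xy\approx yx$ and $x+xy\approx x$ (in addition to the idempotent semiring axioms). Every idempotent semiring has a least distributive lattice congruence. *)

Section Defs.
Context {S : Type}.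
Variables (add mul : S -> S -> S).

Definition idempotent_semiring : Prop :=
  (forall x y z, add x (add y z) = add (add x y) z) /\
  (forall x, add x x = x) /\
  (forall x y z, mul x (mul y z) = mul (mul x y) z) /\
  (forall x, mul x x = x) /\
  (forall x y z, mul x (add y z) = add (mul x y) (mul x z)) /\
  (forall x y z, mul (add x y) z = add (mul x z) (mul y z)).

Definition congruence (r : S -> S -> Prop) : Prop :=
  (forall x, r x x) /\
  (forall x y, r x y -> r y x) /\
  (forall x y z, r x y -> r y z -> r x z) /\
  (forall x y u v, r x y -> r u v -> r (add x u) (add y v)) /\
  (forall x y u v, r x y -> r u v -> r (mul x u) (mul y v)).

Definition cong_gen (r : S -> S -> Prop) (a b : S) : Prop :=
  forall c, congruence c -> (forall x y, r x y -> c x y) -> c a b.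

(** Distributive lattice congruence: S/rho satisfies x+y = y+x, xy = yx, x + xy = x
    (the idempotent semiring axioms hold automatically in the quotient). *)
Definition dl_congruence (rho : S -> S -> Prop) : Prop :=
  congruence rho /\
  (forall x y, rho (add x y) (add y x)) /\
  (forall x y, rho (mul x y) (mul y x)) /\
  (forall x y, rho (add x (mul x y)) x).

Definition least_dl_congruence (rho : S -> S -> Prop) : Prop :=
  dl_congruence rho /\
  (forall rho', dl_congruence rho' -> forall a b, rho a b -> rho' a b).

Definition sigma (a b : S) : Prop :=
  mul (mul a b) a = add (add (mul (mul a b) a) a) (mul (mul a b) a) /\
  mul (mul b a) b = add (add (mul (mul b a) b) b) (mul (mul b a) b).

End Defs.

From Stdlib Require Import Setoid Morphisms.

(* In a distributive lattice quotient aba = ab and a + ab = a, so a sigma b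
   forces ab = a and symmetrically ba = b, whence a = b: sigma lies in every
   distributive lattice congruence.  Conversely the pairs (xy, yx), (x + xy, x)
   and (yx + x, x) are already sigma-related in S by band identities, and
   commutativity of addition follows from these in any congruence. *)

Section IdempotentSemiring.

Context {S : Type} (add mul : S -> S -> S).

Lemma congruence_cong_gen (r : S -> S -> Prop) : congruence add mul (cong_gen add mul r).
Proof.
  unfold cong_gen; split; [|split; [|split; [|split]]].
  - intros x c [Hr _] _; apply Hr.
  - intros x y Hxy c Hc Hr; apply Hc, Hxy; assumption.
  - intros x y z Hxy Hyz c Hc Hr.
    apply (proj1 (proj2 (proj2 Hc)) x y z); [apply Hxy | apply Hyz]; assumption.
  - intros x y u v Hxy Huv c Hc Hr; apply Hc; [apply Hxy | apply Huv]; assumption.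
  - intros x y u v Hxy Huv c Hc Hr; apply Hc; [apply Hxy | apply Huv]; assumption.
Qed.

Lemma cong_gen_sub (r : S -> S -> Prop) x y : r x y -> cong_gen add mul r x y.
Proof. intros Hxy c _ Hr; exact (Hr x y Hxy). Qed.

Hypothesis HS : idempotent_semiring add mul.

Let addA : forall x y z, add x (add y z) = add (add x y) z := proj1 HS.
Let addI : forall x, add x x = x := proj1 (proj2 HS).
Let mulA : forall x y z, mul x (mul y z) = mul (mul x y) z := proj1 (proj2 (proj2 HS)).
Let mulI : forall x, mul x x = x := proj1 (proj2 (proj2 (proj2 HS))).
Let mulDr : forall x y z, mul x (add y z) = add (mul x y) (mul x z) :=
  proj1 (proj2 (proj2 (proj2 (proj2 HS)))).
Let mulDl : forall x y z, mul (add x y) z = add (mul x z) (mul y z) :=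
  proj2 (proj2 (proj2 (proj2 (proj2 HS)))).

Lemma add_band_absorb_l a w : add (add (add a w) a) (add a w) = add a w.
Proof. rewrite <- (addA (add a w) a), (addA a a), !addI; reflexivity. Qed.

Lemma add_band_absorb_r a w : add (add (add w a) a) (add w a) = add w a.
Proof. rewrite <- (addA w a a), !addI; reflexivity. Qed.

Lemma sigma_mulC x y : sigma add mul (mul x y) (mul y x).
Proof.
  assert (E : forall a b, mul (mul (mul a b) (mul b a)) (mul a b) = mul a b).
  { intros a b; rewrite <- !mulA, (mulA b b), mulI, (mulA a a b), mulI,
      (mulA a b (mul a b)), mulI; reflexivity. }
  split; rewrite E, !addI; reflexivity.
Qed.

Lemma sigma_absorb_mul_r x y : sigma add mul (add x (mul x y)) x.
Proof.
  set (b := add x (mul x y)).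
  assert (xb : mul x b = b) by (unfold b; rewrite mulDr, mulI, mulA, mulI; reflexivity).
  split.
  - rewrite <- mulA, xb, mulI, !addI; reflexivity.
  - rewrite xb; unfold b; rewrite mulDl, mulI, add_band_absorb_l; reflexivity.
Qed.

Lemma sigma_absorb_mul_l x y : sigma add mul (add (mul y x) x) x.
Proof.
  set (b := add (mul y x) x).
  assert (bx : mul b x = b) by (unfold b; rewrite mulDl, mulI, <- mulA, mulI; reflexivity).
  split.
  - rewrite bx, mulI, !addI; reflexivity.
  - rewrite <- mulA, bx; unfold b; rewrite mulDr, mulI, add_band_absorb_r; reflexivity.
Qed.

Section Congruence.

Variable c : S -> S -> Prop.
Hypothesis Hc : congruence add mul c.

#[local] Instance congruence_Equivalence : Equivalence c.
Proof. destruct Hc as [Hr [Hs [Ht _]]]; split; [exact Hr | exact Hs | exact Ht]. Qed.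

#[local] Instance add_Proper : Proper (c ==> c ==> c) add.
Proof. intros x y Hxy u v Huv; apply Hc; assumption. Qed.

#[local] Instance mul_Proper : Proper (c ==> c ==> c) mul.
Proof. intros x y Hxy u v Huv; apply Hc; assumption. Qed.

Lemma congruence_addC :
  (forall x y, c (mul x y) (mul y x)) ->
  (forall x y, c (add x (mul x y)) x) ->
  (forall x y, c (add (mul y x) x) x) ->
  forall x y, c (add x y) (add y x).
Proof.
  intros mulC absorb_r absorb_l.
  assert (absorb_l' : forall x y, c (add (mul x y) x) x).
  { intros x y; rewrite (mulC x y); apply absorb_l. }
  (* Both (x+y)(y+x) = (xy + x) + (y + yx) ~ x + y and its mirror image ~ y + x. *)
  assert (sq : forall x y, c (mul (add x y) (add y x)) (add x y)).
  { intros x y; rewrite mulDl, !mulDr, !mulI, absorb_l', absorb_r; reflexivity. }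
  intros x y; rewrite <- (sq x y), mulC; apply sq.
Qed.

Lemma dl_congruence_sigma_sub :
  (forall x y, c (add x y) (add y x)) ->
  (forall x y, c (mul x y) (mul y x)) ->
  (forall x y, c (add x (mul x y)) x) ->
  forall a b, sigma add mul a b -> c a b.
Proof.
  intros addC mulC absorb.
  assert (half : forall a b,
    mul (mul a b) a = add (add (mul (mul a b) a) a) (mul (mul a b) a) -> c (mul a b) a).
  { intros a b H.
    assert (E : c (mul (mul a b) a) (mul a b)) by (rewrite mulC, mulA, mulI; reflexivity).
    rewrite <- E at 1; rewrite H, E, (addC (mul a b) a), !absorb; reflexivity. }
  intros a b [Hab Hba].
  rewrite <- (half a b Hab), mulC, (half b a Hba); reflexivity.
Qed.

End Congruence.
End IdempotentSemiring.

Theorem lemma2p1 (S : Type) (add mul : S -> S -> S)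
  (HS : idempotent_semiring add mul) :
  least_dl_congruence add mul (cong_gen add mul (sigma add mul)).
Proof.
  set (gen := cong_gen add mul (sigma add mul)).
  assert (Hgen : congruence add mul gen) by apply congruence_cong_gen.
  assert (mulC : forall x y, gen (mul x y) (mul y x))
    by (intros; apply cong_gen_sub, sigma_mulC, HS).
  assert (absorb_r : forall x y, gen (add x (mul x y)) x)
    by (intros; apply cong_gen_sub, sigma_absorb_mul_r, HS).
  assert (absorb_l : forall x y, gen (add (mul y x) x) x)
    by (intros; apply cong_gen_sub, sigma_absorb_mul_l, HS).
  split.
  - split; [exact Hgen | split; [| split]]; [| exact mulC | exact absorb_r].
    exact (congruence_addC add mul HS gen Hgen mulC absorb_r absorb_l).
  - intros rho (Hrho & addC & mulC' & absorb) a b Hab.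
    apply Hab; [exact Hrho |].
    exact (dl_congruence_sigma_sub add mul HS rho Hrho addC mulC' absorb).
Qed.
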